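(* Let $p$ be a prime, let $G$ be a cyclic group of order $p$, and let $S$ be an unsplittable minimal zero-sum sequence over $G$. Let $g\in G$, let $x\in[2,p-1]$ be an integer and $k\ge 3$ an integer, and suppose $T=g^k(xg)^2$ is a subsequence of $S$. Then $|\Sigma(T)|\ge 2|T|$. Moreover, unless $T=g^k\big(\frac{p+3}{2}g\big)^2$, one has $|\Sigma(T)|\ge 2|T|+1$.
   Context: A sequence over $G$ is a finite unordered list of elements of $G$ with repetition allowed, written multiplicatively; $g^k$ denotes $k$ copies of $g$, $xg$ is the $x$-fold multiple of $g$, $|T|$ is the length, $\sigma(T)$ the sum of terms, and $\operatorname{supp}(T)$ the set of elements occurring. $T$ is a subsequence of $S$ if each element occurs in $T$ at most as often as in $S$. $\Sigma(T)$ is the set of sums $\sigma(U)$ over all subsequences $U$ of $T$ with $|U|\ge 1$. $S$ is a minimal zero-sum sequence if $\sigma(S)=0$ and no subsequence $U$ with $1\le|U|<|S|$ has $\sigma(U)=0$. A minimal zero-sum sequence $S$ is unsplittable if there do not exist $h\in\operatorname{supp}(S)$ and $y,z\in G$ with $y+z=h$ such that the sequence obtained from $S$ by replacing one copy of $h$ with the two terms $y,z$ is again a minimal zero-sum sequence. *)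

(* Sequences over a finite abelian group G are modelled as
   lists [seq G], considered up to permutation (multisets). *)
From HB Require Import structures.
From mathcomp Require Import all_boot all_order all_algebra.
Set Implicit Arguments. Unset Strict Implicit. Unset Printing Implicit Defensive.
Import GRing.Theory.
Local Open Scope ring_scope.

Section ZeroSum.
Variable G : finZmodType.

Definition subseqm (T S : seq G) : Prop :=
  forall a : G, (count_mem a T <= count_mem a S)%N.

Definition sigma (T : seq G) : G := \sum_(a <- T) a.

Definition Sigma (T : seq G) : {set G} :=
  [set y | [exists I : {set 'I_(size T)},
              (I != set0) && ((\sum_(i in I) nth 0 T i) == y)]].

Definition minimal_zero_sum (S : seq G) : Prop :=
  sigma S = 0 /\
  forall U : seq G, subseqm U S -> (1 <= size U)%N -> (size U < size S)%N ->
    sigma U <> 0.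

Definition unsplittable (S : seq G) : Prop :=
  minimal_zero_sum S /\
  ~ exists (h y z : G), [/\ h \in S, y + z = h &
                          minimal_zero_sum (y :: z :: rem h S)].
End ZeroSum.

(* Since S is minimal, no proper nonempty subsequence of T sums to zero: this
   forces g <> 0, x + k < p, and 2x + k <= p when 2x < p.  Since S is
   unsplittable, x g cannot be split into g and (x - 1) g, which forces k < x,
   and g cannot be split into x g and x g, which forces 2x <> p + 1.  The sums
   i g + j (x g) with i <= k and j <= 2 then fill the three blocks [1, k],
   [x, x + k] and [2x, 2x + k] (mod p) of multiples of g; as g has order p they
   are distinct elements as soon as their indices are distinct in (0, p], and
   counting the blocks gives the bounds. *)

From HB Require Import structures.
From mathcomp Require Import all_boot all_order all_algebra.
From mathcomp Require Import zify.
Import GRing.Theory.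
Local Open Scope ring_scope.

Set Implicit Arguments. Unset Strict Implicit.

Section SubsequenceSums.
Variable G : finZmodType.
Implicit Types (s t r U R S : seq G) (a b y : G).

Lemma sigma_cons a s : sigma (a :: s) = a + sigma s.
Proof. by rewrite /sigma big_cons. Qed.

Lemma sigma_cat s t : sigma (s ++ t) = sigma s + sigma t.
Proof. by rewrite /sigma big_cat. Qed.

Lemma sigma_nseq n a : sigma (nseq n a) = a *+ n.
Proof. by rewrite /sigma big_nseq; elim: n => //= n ->; rewrite mulrS. Qed.

Lemma perm_sigma s t : perm_eq s t -> sigma s = sigma t.
Proof. by move=> st; rewrite /sigma (perm_big _ st). Qed.

Lemma subseqm_trans R U S : subseqm U R -> subseqm R S -> subseqm U S.
Proof. by move=> UR RS a; apply: leq_trans (UR a) (RS a). Qed.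

Lemma subseqm_size U S : subseqm U S -> (size U <= size S)%N.
Proof. by move=> /count_subseqP[s /size_subseq + /perm_size ->]. Qed.

Lemma subseqm_complement U R : subseqm U R -> exists r, perm_eq R (U ++ r).
Proof.
move=> /count_subseqP[s /perm_to_subseq[r Rsr] Us].
by exists r; rewrite (perm_trans Rsr) // perm_cat2r perm_sym.
Qed.

Lemma subseqm_consP y U R : subseqm U (y :: R) ->
  (exists2 U', perm_eq U (y :: U') & subseqm U' R) \/ subseqm U R.
Proof.
move=> UR; have [yU|yU] := boolP (y \in U).
  left; exists (rem y U); first exact: perm_to_rem.
  by move=> a; rewrite count_mem_rem; have := UR a; rewrite /=; lia.
right=> a; have := UR a; rewrite /=; case: eqVneq => [<- _|_ //].
by rewrite (count_memPn yU).
Qed.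

Lemma minimal_zero_sum_proper S U : minimal_zero_sum S -> subseqm U S ->
  (0 < size U < size S)%N -> sigma U != 0.
Proof. by case=> _ minS US /andP[U0 US']; apply/eqP/minS. Qed.

Section Split.
Variables (S : seq G) (a b : G) (n : nat).
Hypotheses (minS : minimal_zero_sum S) (bS : b \in S) (b_def : b = a *+ n.+1).
Hypotheses (n_gt0 : (0 < n)%N) (n_le_count : (n <= count_mem a (rem b S))%N).

Let R := rem b S.

Let perm_S : perm_eq S (b :: R). Proof. exact: perm_to_rem. Qed.

Let size_S : size S = (size R).+1. Proof. by rewrite (perm_size perm_S). Qed.

Let sigma_R : sigma R = - b.
Proof. by apply/eqP; rewrite -addr_eq0 addrC -sigma_cons -(perm_sigma perm_S) minS.1. Qed.

Let subseqm_R U : subseqm U R -> subseqm U S.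
Proof.
move=> UR; apply: subseqm_trans UR _ => e.
by rewrite (permP perm_S) /= leq_addl.
Qed.

(* If the complement of t in R still contains a, then a :: t is a proper
   zero-sum subsequence of S; otherwise all copies of a lie in t, and the
   complement of t together with n copies of a is one. *)
Lemma split_cons_sigma_neq0 t : subseqm t R -> a + sigma t != 0.
Proof.
move=> tR; apply/eqP=> at0.
have [r Rtr] := subseqm_complement tR.
have size_R : size R = (size t + size r)%N by rewrite (perm_size Rtr) size_cat.
have count_R (e : G) : count_mem e R = (count_mem e t + count_mem e r)%N.
  by rewrite (permP Rtr) count_cat.
have [ar|ar] := boolP (a \in r).
  suff: sigma (a :: t) != 0 by rewrite sigma_cons at0 eqxx.
  apply: (minimal_zero_sum_proper minS).
    apply: subseqm_R => e; rewrite /= count_R.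
    have : (0 < count_mem a r)%N by rewrite -has_count has_pred1.
    by case: eqP => [<-|_] /=; lia.
  have : (0 < size r)%N by case: (r) ar.
  by rewrite /= size_S size_R; lia.
have count_ar : count_mem a r = 0%N by apply/count_memPn.
have n_le_count_t : (n <= count_mem a t)%N.
  by move: n_le_count; rewrite -/R count_R count_ar addn0.
have sigma_r : sigma r = a - b.
  by rewrite -[sigma r]add0r -at0 -addrA -sigma_cat -(perm_sigma Rtr) sigma_R.
suff: sigma (r ++ nseq n a) != 0.
  by rewrite sigma_cat sigma_nseq sigma_r b_def mulrS opprD addrA subrr add0r addNr eqxx.
apply: (minimal_zero_sum_proper minS).
  apply: subseqm_R => e; rewrite count_cat count_nseq count_R.
  rewrite /=; case: (@eqP _ a e) => [<-|_] /=.
    by rewrite mul1n addnC leq_add2r.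
  by rewrite mul0n addn0 leq_addl.
have : (count_mem a t <= size t)%N := count_size _ _.
by rewrite size_cat size_nseq size_S size_R; lia.
Qed.

Lemma minimal_zero_sum_split : minimal_zero_sum (a :: a *+ n :: R).
Proof.
split; first by rewrite !sigma_cons sigma_R b_def mulrS addrA subrr.
move=> U UaR U_gt0 U_lt; apply/eqP.
have [[U' UU' U'cR]|UcR] := subseqm_consP UaR.
  rewrite (perm_sigma UU') sigma_cons.
  have [[U'' U'U'' U''R]|U'R] := subseqm_consP U'cR; last first.
    exact: split_cons_sigma_neq0.
  rewrite (perm_sigma U'U'') sigma_cons addrA -mulrS -b_def -sigma_cons.
  apply: (minimal_zero_sum_proper minS).
    by move=> e; rewrite (permP perm_S) /= leq_add2l.
  by move: U_gt0 U_lt; rewrite (perm_size UU') /= (perm_size U'U'') size_S /=; lia.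
have [[U' UU' U'R]|UR] := subseqm_consP UcR; last first.
  apply: (minimal_zero_sum_proper minS); first exact: subseqm_R.
  by move: U_gt0 U_lt (subseqm_size UR); rewrite size_S /=; lia.
have [r Rr] := subseqm_complement U'R.
have rR : subseqm r R by move=> e; rewrite (permP Rr) count_cat leq_addl.
have sigma_Ur : sigma U' + sigma r = - (a + a *+ n).
  by rewrite -sigma_cat -(perm_sigma Rr) sigma_R b_def mulrS.
rewrite (perm_sigma UU') sigma_cons.
have -> : a *+ n + sigma U' = - (a + sigma r).
  by rewrite -[sigma U'](addrK (sigma r)) sigma_Ur !opprD addrA (addrCA _ (- a)) subrr addr0.
by rewrite oppr_eq0 split_cons_sigma_neq0.
Qed.

End Split.

Lemma unsplittable_count_lt S a n : unsplittable S -> a *+ n.+1 \in S ->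
  (0 < n)%N -> (count_mem a (rem (a *+ n.+1) S) < n)%N.
Proof.
case=> minS no_split bS n_gt0; rewrite ltnNge; apply/negP=> n_le.
apply: no_split; exists (a *+ n.+1), a, (a *+ n); split; first by [].
  by rewrite mulrS.
exact: minimal_zero_sum_split.
Qed.

Lemma mem_Sigma_mask (T : seq G) (m : bitseq) :
  size m = size T -> has id m -> sigma (mask m T) \in Sigma T.
Proof.
move=> size_m has_m; rewrite inE; apply/existsP.
exists [set i : 'I_(size T) | nth false m i]; apply/andP; split.
  have [i i_lt m_i] := @has_nthP _ _ _ false has_m.
  rewrite size_m in i_lt.
  by apply/set0Pn; exists (Ordinal i_lt); rewrite inE.
rewrite /sigma big_mask; apply/eqP; apply: eq_big => i; first by rewrite inE andbT.
by rewrite (tnth_nth 0).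
Qed.

Lemma mulrn_add_mem_Sigma a b k l i j : (i <= k)%N -> (j <= l)%N -> (0 < i + j)%N ->
  a *+ i + b *+ j \in Sigma (nseq k a ++ nseq l b).
Proof.
move=> i_le j_le ij_gt0.
pose prefix n m := nseq n true ++ nseq (m - n) false.
have mask_prefix n m c : (n <= m)%N -> mask (prefix n m) (nseq m c) = nseq n c.
  move=> n_le; rewrite -[in nseq m c](subnKC n_le) nseqD mask_cat ?size_nseq //.
  by rewrite mask_true ?size_nseq // mask_false cats0.
have := @mem_Sigma_mask (nseq k a ++ nseq l b) (prefix i k ++ prefix j l).
rewrite mask_cat ?size_nseq ?size_cat ?size_nseq ?subnKC // !mask_prefix //.
rewrite sigma_cat !sigma_nseq; apply=> //.
rewrite !has_cat !has_nseq /= !andbT !andbF !orbF.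
by case: i ij_gt0 {i_le} => [|i] //=; rewrite add0n => ->.
Qed.

End SubsequenceSums.

Section PrimeCyclic.
Variables (p : nat) (g : 'Z_p).
Hypotheses (p_prime : prime p) (g_neq0 : g != 0).

Lemma Zp_mulrn_eq0 n : (g *+ n == 0) = (p %| n)%N.
Proof.
have p_gt1 := prime_gt1 p_prime.
have val_g_lt : (val g < p)%N by rewrite -[X in (_ < X)%N]Zp_cast ?ltn_ord.
have val_g_gt0 : (0 < val g)%N.
  by rewrite lt0n; apply: contra g_neq0 => /eqP g0; apply/eqP/val_inj.
have val_mulrn : val (g *+ n) = (val g * n %% p)%N.
  by rewrite Zp_mulrn /=; congr (_ %% _)%N; exact: Zp_cast.
by rewrite -val_eqE val_mulrn -/(dvdn p _) Euclid_dvdM // gtnNdvd.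
Qed.

Lemma Zp_mulrn_mod n : g *+ (n %% p) = g *+ n.
Proof.
have /eqP g_p : g *+ p == 0 by rewrite Zp_mulrn_eq0.
by rewrite {2}(divn_eq n p) mulrnDr mulnC mulrnA g_p mul0rn add0r.
Qed.

Lemma Zp_mulrn_inj v w : (0 < v <= p)%N -> (0 < w <= p)%N -> g *+ v = g *+ w -> v = w.
Proof.
wlog v_le_w : v w / (v <= w)%N.
  move=> wlog_le v_range w_range gv_gw.
  case: (leqP v w) => [le|/ltnW le]; first exact: wlog_le.
  exact/esym/(wlog_le w v).
move=> v_range w_range gv_gw.
have /eqP : g *+ (w - v) = 0 by rewrite mulrnBr // -gv_gw subrr.
rewrite Zp_mulrn_eq0 => p_dvd.
have [|wv_gt0] := posnP (w - v); first by lia.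
by have := dvdn_leq wv_gt0 p_dvd; lia.
Qed.

Lemma card_mulrn_ge (A : {set 'Z_p}) L : uniq L ->
  {in L, forall v, 0 < v <= p}%N -> {in L, forall v, g *+ v \in A} ->
  (size L <= #|A|)%N.
Proof.
move=> L_uniq L_range L_A; apply/card_geqP; exists (map (fun v => g *+ v) L); split.
- rewrite map_inj_in_uniq // => v w v_L w_L; exact: Zp_mulrn_inj (L_range v v_L) (L_range w w_L).
- by rewrite size_map.
- by move=> y /mapP [v v_L ->]; apply: L_A.
Qed.

End PrimeCyclic.

Lemma uniq_iota_cat m n s : {in s, forall v, m + n <= v}%N -> uniq s ->
  uniq (iota m n ++ s).
Proof.
move=> s_ge s_uniq; rewrite cat_uniq iota_uniq s_uniq andbT /=.
by apply/hasPn => v /s_ge; rewrite mem_iota; lia.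
Qed.

Section SumsOfBlock.
Variables (p : nat) (g : 'Z_p) (x k : nat).
Hypotheses (p_prime : prime p) (g_neq0 : g != 0).
Hypotheses (x_add_k_lt : (x + k < p)%N) (k_lt_x : (k < x)%N).

Let T := nseq k g ++ nseq 2 (g *+ x).

Let mulrn_mem_Sigma v i j : (i <= k)%N -> (j <= 2)%N -> (0 < i + j)%N ->
  (i + x * j = v \/ i + x * j = v + p)%N -> g *+ v \in Sigma T.
Proof.
move=> i_le j_le ij_gt0 v_eq.
have v_mod : v = i + x * j %[mod p] by case: v_eq => ->; rewrite ?modnDr.
rewrite -(Zp_mulrn_mod p_prime g_neq0) v_mod Zp_mulrn_mod // mulrnDr mulrnA.
exact: mulrn_add_mem_Sigma.
Qed.

Lemma card_Sigma_nseq2_small : (2 * x + k <= p)%N -> (3 * k + 2 <= #|Sigma T|)%N.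
Proof.
move=> le_p; set L := iota 1 k ++ iota x k.+1 ++ iota (2 * x) k.+1.
have L_uniq : uniq L.
  apply: uniq_iota_cat; last apply: uniq_iota_cat; rewrite ?iota_uniq // => v;
    rewrite ?mem_cat !mem_iota; lia.
apply: leq_trans (card_mulrn_ge p_prime g_neq0 (A := Sigma T) L_uniq _ _).
- by rewrite /L !size_cat !size_iota; lia.
- by move=> v; rewrite !mem_cat !mem_iota; lia.
- move=> v; rewrite !mem_cat !mem_iota => /or3P[v_in|v_in|v_in].
  + by apply: (mulrn_mem_Sigma (i := v) (j := 0%N)); lia.
  + by apply: (mulrn_mem_Sigma (i := v - x) (j := 1%N)); lia.
  + by apply: (mulrn_mem_Sigma (i := v - 2 * x) (j := 2%N)); lia.
Qed.

Lemma card_Sigma_nseq2_large :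
  (p < 2 * x)%N -> (k + 1 + minn (2 * x - p + k) (2 * k + 1) <= #|Sigma T|)%N.
Proof.
move=> p_lt; set y := (2 * x - p)%N.
have [y_le|k_lt_y] := leqP y k.
  set L := iota 1 (y + k) ++ iota x k.+1.
  have L_uniq : uniq L.
    by apply: uniq_iota_cat; rewrite ?iota_uniq // => v; rewrite mem_iota; lia.
  apply: leq_trans (card_mulrn_ge p_prime g_neq0 (A := Sigma T) L_uniq _ _).
  - by rewrite /L !size_cat !size_iota; lia.
  - by move=> v; rewrite !mem_cat !mem_iota; lia.
  move=> v; rewrite !mem_cat !mem_iota => /orP[v_in|v_in].
    have [v_le|k_lt_v] := leqP v k.
      by apply: (mulrn_mem_Sigma (i := v) (j := 0%N)); lia.
    by apply: (mulrn_mem_Sigma (i := v - y) (j := 2%N)); lia.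
  by apply: (mulrn_mem_Sigma (i := v - x) (j := 1%N)); lia.
set L := iota 1 k ++ iota y k.+1 ++ iota x k.+1.
have L_uniq : uniq L.
  apply: uniq_iota_cat; last apply: uniq_iota_cat; rewrite ?iota_uniq // => v;
    rewrite ?mem_cat !mem_iota; lia.
apply: leq_trans (card_mulrn_ge p_prime g_neq0 (A := Sigma T) L_uniq _ _).
- by rewrite /L !size_cat !size_iota; lia.
- by move=> v; rewrite !mem_cat !mem_iota; lia.
move=> v; rewrite !mem_cat !mem_iota => /or3P[v_in|v_in|v_in].
- by apply: (mulrn_mem_Sigma (i := v) (j := 0%N)); lia.
- by apply: (mulrn_mem_Sigma (i := v - y) (j := 2%N)); lia.
- by apply: (mulrn_mem_Sigma (i := v - x) (j := 1%N)); lia.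
Qed.

End SumsOfBlock.

Section UnsplittableBlock.
Variables (p : nat) (S : seq 'Z_p) (g : 'Z_p) (x k : nat).
Hypotheses (p_prime : prime p) (unsplit_S : unsplittable S).
Hypotheses (x_ge2 : (2 <= x)%N) (x_lt_p : (x < p)%N) (k_gt0 : (0 < k)%N).
Hypothesis T_sub_S : subseqm (nseq k g ++ nseq 2 (g *+ x)) S.

Lemma nseq2_sub_sum_neq0 i j : (i <= k)%N -> (j <= 2)%N -> (0 < i + j < k + 2)%N ->
  g *+ i + (g *+ x) *+ j != 0.
Proof.
move=> i_le j_le ij_range; rewrite -[g *+ i]sigma_nseq -[_ *+ j]sigma_nseq -sigma_cat.
apply: (minimal_zero_sum_proper unsplit_S.1).
  apply: subseqm_trans T_sub_S => a; rewrite !count_cat !count_nseq.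
  by apply: leq_add; apply: leq_mul.
have := subseqm_size T_sub_S; rewrite !size_cat !size_nseq; lia.
Qed.

Lemma nseq2_g_neq0 : g != 0.
Proof. by have := @nseq2_sub_sum_neq0 1 0; rewrite mulr1n mulr0n addr0; apply; lia. Qed.

Lemma nseq2_x_add_k_lt : (x + k < p)%N.
Proof.
rewrite ltnNge; apply/negP => le_xk.
suff: g *+ (p - x) + (g *+ x) *+ 1 == 0.
  by apply/negP; apply: nseq2_sub_sum_neq0; lia.
by rewrite -mulrnDr subnK ?(ltnW x_lt_p) // (Zp_mulrn_eq0 p_prime nseq2_g_neq0).
Qed.

Lemma nseq2_double_x_add_k_le : (2 * x < p)%N -> (2 * x + k <= p)%N.
Proof.
move=> lt_p; rewrite leqNgt; apply/negP => lt_xk.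
suff: g *+ (p - 2 * x) + (g *+ x) *+ 2 == 0.
  by apply/negP; apply: nseq2_sub_sum_neq0; lia.
rewrite -mulrnA (mulnC x) -mulrnDr subnK ?(ltnW lt_p) //.
by rewrite (Zp_mulrn_eq0 p_prime nseq2_g_neq0).
Qed.

Let count_g : (k <= count_mem g S)%N.
Proof. by apply: leq_trans (T_sub_S g); rewrite count_cat count_nseq /= eqxx mul1n leq_addr. Qed.

Let count_gx : (2 <= count_mem (g *+ x) S)%N.
Proof. by apply: leq_trans (T_sub_S _); rewrite count_cat count_nseq /= eqxx leq_addl. Qed.

Let gx_S : g *+ x \in S.
Proof. by rewrite -has_pred1 has_count; apply: leq_trans count_gx. Qed.

Lemma nseq2_k_lt_x : (k < x)%N.
Proof.
rewrite ltnNge; apply/negP => x_le_k.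
have x_def : x = (x.-1).+1 by lia.
have x1_gt0 : (0 < x.-1)%N by lia.
have := unsplittable_count_lt unsplit_S (a := g) (n := x.-1).
rewrite -x_def => /(_ gx_S x1_gt0); rewrite count_mem_rem ltnNge => /negP; apply.
by apply: leq_trans (leq_sub2r _ count_g); case: (_ == _); lia.
Qed.

Lemma nseq2_double_x_neq : (2 * x != p + 1)%N.
Proof.
apply/eqP => double_x.
have /eqP g_p : g *+ p == 0 by rewrite (Zp_mulrn_eq0 p_prime nseq2_g_neq0).
have g_def : g = (g *+ x) *+ 2 by rewrite -mulrnA (mulnC x) double_x mulrnDr g_p add0r.
have g_S : g \in S by rewrite -has_pred1 has_count; apply: leq_trans count_g.
have := unsplittable_count_lt unsplit_S (a := g *+ x) (n := 1).
rewrite -g_def => /(_ g_S isT); rewrite count_mem_rem ltnNge => /negP; apply.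
by apply: leq_trans (leq_sub2r _ count_gx); case: (_ == _).
Qed.

End UnsplittableBlock.

Theorem lemma2p8 (p : nat) (pr_p : prime p) (S : seq 'Z_p) (g : 'Z_p)
    (x k : nat) :
  unsplittable S ->
  (2 <= x <= p - 1)%N -> (3 <= k)%N ->
  subseqm (nseq k g ++ nseq 2 (g *+ x)) S ->
  let T := nseq k g ++ nseq 2 (g *+ x) in
  (2 * size T <= #|Sigma T|)%N /\
  (~ perm_eq T (nseq k g ++ nseq 2 (g *+ ((p + 3) %/ 2))) ->
     (2 * size T + 1 <= #|Sigma T|)%N).
Proof.
move=> unsplit_S /andP[x_ge2 x_le] k_ge3 T_sub_S T.
have x_lt_p : (x < p)%N by lia.
have k_gt0 : (0 < k)%N by lia.
have g_neq0 := nseq2_g_neq0 pr_p unsplit_S x_ge2 x_lt_p k_gt0 T_sub_S.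
have x_add_k_lt := nseq2_x_add_k_lt pr_p unsplit_S x_ge2 x_lt_p k_gt0 T_sub_S.
have k_lt_x := nseq2_k_lt_x pr_p unsplit_S x_ge2 x_lt_p k_gt0 T_sub_S.
rewrite /T size_cat !size_nseq.
have [lt_p|p_le] := ltnP (2 * x) p.
  have := nseq2_double_x_add_k_le pr_p unsplit_S x_ge2 x_lt_p k_gt0 T_sub_S lt_p.
  move/(card_Sigma_nseq2_small pr_p g_neq0 x_add_k_lt k_lt_x).
  by split=> [|_]; lia.
have p_odd : odd p.
  by have [p2|] := even_prime pr_p; first by move: x_lt_p; rewrite p2; lia.
have := odd_double_half p; rewrite p_odd -muln2 => p_half.
have double_x_neq := nseq2_double_x_neq pr_p unsplit_S x_ge2 x_lt_p k_gt0 T_sub_S.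
have p3_le : (p + 3 <= 2 * x)%N by lia.
have p_lt : (p < 2 * x)%N by lia.
have := card_Sigma_nseq2_large pr_p g_neq0 x_add_k_lt k_lt_x p_lt.
split=> [|not_exceptional]; first lia.
suff : (2 * x != p + 3)%N by lia.
apply/eqP=> double_x; apply: not_exceptional.
by rewrite -double_x mulKn.
Qed.
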